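(* Let $G$ be a finite group, and let $a_1,a_2,a_3,a_4$ be independent uniformly random elements of $G$. Then each of the probabilities \[ Pr(a_1a_2a_3a_4=a_3a_2a_4a_1),\quad Pr(a_1a_2a_3a_4=a_4a_2a_1a_3), \] \[ Pr(a_1a_2a_3a_4=a_2a_4a_3a_1),\quad Pr(a_1a_2a_3a_4=a_4a_1a_3a_2) \] equals $Pr^4(G)$, the probability that $a_1a_2a_3a_4=a_4a_3a_2a_1$. *)

From mathcomp Require Import all_boot all_algebra all_fingroup.
Set Implicit Arguments. Unset Strict Implicit. Unset Printing Implicit Defensive.

Definition prob4 (gT : finGroupType) (P : gT -> gT -> gT -> gT -> bool) : rat :=
  (#|[set x : gT * gT * gT * gT | P x.1.1.1 x.1.1.2 x.1.2 x.2]|%:R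
    / (#|gT| ^ 4)%:R)%R.

Definition Pr4 (gT : finGroupType) : rat :=
  prob4 (fun a1 a2 a3 a4 : gT => (a1 * a2 * a3 * a4 == a4 * a3 * a2 * a1)%g).

From mathcomp Require Import all_boot all_algebra all_fingroup.
Set Implicit Arguments. Unset Strict Implicit. Unset Printing Implicit Defensive.

(* Each of the four events is the event a1 a2 a3 a4 = a4 a3 a2 a1 after an
   invertible change of variables on G^4, built from products, inverses and
   permutations of the a_i; such a change of variables preserves the uniform
   distribution, hence the probability. *)

Section Prob4Substitution.
Variable gT : finGroupType.
Local Open Scope group_scope.

Lemma prob4_inj (P Q : gT -> gT -> gT -> gT -> bool)
    (f : gT * gT * gT * gT -> gT * gT * gT * gT) :
    injective f ->
    (forall a b c d, P a b c d = let: (p, q, r, s) := f (a, b, c, d) in Q p q r s) ->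
  prob4 P = prob4 Q.
Proof.
move=> f_inj PQ; rewrite /prob4; congr (_ %:R / _)%R.
rewrite -[in RHS](card_preimset _ f_inj); apply: eq_card => -[[[a b] c] d].
by rewrite !inE PQ; case: (f _) => -[[p q] r] s.
Qed.

Lemma prob4_3241 :
  prob4 (fun a1 a2 a3 a4 : gT => a1 * a2 * a3 * a4 == a3 * a2 * a4 * a1) = Pr4 gT.
Proof.
pose f (x : gT * gT * gT * gT) := let: (a, b, c, d) := x in (a * d^-1, c^-1, b^-1, d^-1).
apply: (@prob4_inj _ _ f) => [|a b c d].
  by apply: (can_inj (g := f)) => -[[[a b] c] d]; rewrite /= !invgK mulgKV.
rewrite /= -[RHS](inj_eq invg_inj) !invMg !invgK -!mulgA (inj_eq (mulgI _)).
by rewrite -[RHS](inj_eq (mulgI a)) -[RHS](inj_eq (mulIg a)) !mulgA mulgKV mulgV mul1g.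
Qed.

Lemma prob4_4213 :
  prob4 (fun a1 a2 a3 a4 : gT => a1 * a2 * a3 * a4 == a4 * a2 * a1 * a3) = Pr4 gT.
Proof.
pose f (x : gT * gT * gT * gT) := let: (a, b, c, d) := x in (c * d, b, a, c).
pose g (x : gT * gT * gT * gT) := let: (a, b, c, d) := x in (c, b, d, d^-1 * a).
apply: (@prob4_inj _ _ f) => [|a b c d].
  by apply: (can_inj (g := g)) => -[[[a b] c] d]; rewrite /= mulKg.
by rewrite /= -!mulgA (inj_eq (mulgI c)) eq_sym.
Qed.

Lemma prob4_2431 :
  prob4 (fun a1 a2 a3 a4 : gT => a1 * a2 * a3 * a4 == a2 * a4 * a3 * a1) = Pr4 gT.
Proof.
pose f (x : gT * gT * gT * gT) := let: (a, b, c, d) := x in (a * b, b^-1, d^-1, c^-1).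
apply: (@prob4_inj _ _ f) => [|a b c d].
  by apply: (can_inj (g := f)) => -[[[a b] c] d]; rewrite /= !invgK mulgK.
rewrite /= mulgK -[RHS](inj_eq invg_inj) !invMg !invgK.
rewrite -[RHS](inj_eq (mulgI (a * b))) -[RHS](inj_eq (mulIg a)).
by rewrite !mulgA mulgKV mulgK mulgV mul1g.
Qed.

Lemma prob4_4132 :
  prob4 (fun a1 a2 a3 a4 : gT => a1 * a2 * a3 * a4 == a4 * a1 * a3 * a2) = Pr4 gT.
Proof.
pose f (x : gT * gT * gT * gT) := let: (a, b, c, d) := x in (a^-1 * d, a, c, b).
pose g (x : gT * gT * gT * gT) := let: (a, b, c, d) := x in (b, d, c, b * a).
apply: (@prob4_inj _ _ f) => [|a b c d].
  by apply: (can_inj (g := g)) => -[[[a b] c] d]; rewrite /= mulKVg.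
by rewrite /= !mulgA mulgK -[RHS](inj_eq (mulgI a)) !mulgA mulgV mul1g eq_sym.
Qed.

End Prob4Substitution.

Theorem mainTheorem8 (gT : finGroupType) :
  [/\ prob4 (fun a1 a2 a3 a4 : gT => (a1 * a2 * a3 * a4 == a3 * a2 * a4 * a1)%g) = Pr4 gT,
      prob4 (fun a1 a2 a3 a4 : gT => (a1 * a2 * a3 * a4 == a4 * a2 * a1 * a3)%g) = Pr4 gT,
      prob4 (fun a1 a2 a3 a4 : gT => (a1 * a2 * a3 * a4 == a2 * a4 * a3 * a1)%g) = Pr4 gT
    & prob4 (fun a1 a2 a3 a4 : gT => (a1 * a2 * a3 * a4 == a4 * a1 * a3 * a2)%g) = Pr4 gT].
Proof.
split.
- exact: prob4_3241.
- exact: prob4_4213.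
- exact: prob4_2431.
- exact: prob4_4132.
Qed.
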